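(* Let $\mathcal{N}$ be an acyclic, deterministic, sound negotiation, and let $m,n$ be two nodes with $\mathit{dom}(m)\cap\mathit{dom}(n)=\emptyset$. Then $m\parallel n$ if and only if there exists a run from $C_{\mathit{init}}$ containing both $m$ and $n$, and there is neither a local path from $m$ to $n$ nor a local path from $n$ to $m$.
   Context: A negotiation is a tuple $\mathcal{N}=(\mathit{Proc},N,\mathit{dom},R,\delta)$ where $\mathit{Proc}$ is a finite set of processes, $N$ is a finite set of nodes, $\mathit{dom}:N\to 2^{\mathit{Proc}}\setminus\{\emptyset\}$, there are two distinguished nodes $n_{\mathit{init}},n_{\mathit{fin}}$ with $\mathit{dom}(n_{\mathit{init}})=\mathit{dom}(n_{\mathit{fin}})=\mathit{Proc}$, $R$ is a set of results, each node $n$ has a set $\mathit{out}(n)\subseteq R$ of results (nonempty for $n\neq n_{\mathit{fin}}$), and $\delta(n,a,p)\subseteq N$ is defined and nonempty exactly when $a\in\mathit{out}(n)$ and $p\in\mathit{dom}(n)$, with $p\in\mathit{dom}(n')$ for all $n'\in\delta(n,a,p)$. $\mathcal{N}$ is deterministic if every $\delta(n,a,p)$ is a singleton. A configuration is a map $C$ assigning to each process a nonempty set of nodes; $C_{\mathit{init}}(p)=\{n_{\mathit{init}}\}$, $C_{\mathit{fin}}(p)=\{n_{\mathit{fin}}\}$. A node $n$ is enabled in $C$ if $n\in C(p)$ for all $p\in\mathit{dom}(n)$. If $n$ is enabled and $a\in\mathit{out}(n)$ then $C\xrightarrow{(n,a)}C'$ with $C'(p)=\delta(n,a,p)$ for $p\in\mathit{dom}(n)$,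 $C'(p)=C(p)$ otherwise. A run is a sequence $(n_1,a_1)(n_2,a_2)\cdots$ of such steps, and it contains $n$ if $n=n_i$ for some $i$; a configuration is reachable if some finite run from $C_{\mathit{init}}$ leads to it; $\mathcal{N}$ is sound if every finite run from $C_{\mathit{init}}$ can be extended to a finite run ending in $C_{\mathit{fin}}$. The graph of $\mathcal{N}$ has vertex set $N$ and edges $n\xrightarrow{p,a}n'$ whenever $n'\in\delta(n,a,p)$; $\mathcal{N}$ is acyclic if this graph is; a local path is a path in this graph. $m\parallel n$ means $\mathit{dom}(m)\cap\mathit{dom}(n)=\emptyset$ and some reachable configuration enables both $m$ and $n$. *)

From mathcomp Require Import all_boot.
Set Implicit Arguments. Unset Strict Implicit. Unset Printing Implicit Defensive.

Record negotiation (Proc Node Res : finType) := Negotiation {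
  dom : Node -> {set Proc};
  n_init : Node;
  n_fin : Node;
  out : Node -> {set Res};
  delta : Node -> Res -> Proc -> {set Node}
}.

Section Neg.
Variables (Proc Node Res : finType) (Ng : negotiation Proc Node Res).

(* Well-formedness conditions of the definition of a negotiation.
   delta n a p is "undefined" (represented by set0) outside a \in out n, p \in dom n. *)
Definition wf_negotiation : Prop :=
  [/\ (forall n, dom Ng n != set0),
      dom Ng (n_init Ng) = [set: Proc] /\
      dom Ng (n_fin Ng) = [set: Proc],
      (forall n, n != n_fin Ng -> out Ng n != set0),
      (forall n a p, (delta Ng n a p != set0) = (a \in out Ng n) && (p \in dom Ng n))
    & (forall n a p n', n' \in delta Ng n a p -> p \in dom Ng n')].

Definition deterministic : Prop :=
  forall n a p, a \in out Ng n -> p \in dom Ng n -> #|delta Ng n a p| = 1.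

Definition config := {ffun Proc -> {set Node}}.

Definition C_init : config := [ffun _ => [set n_init Ng]].
Definition C_fin : config := [ffun _ => [set n_fin Ng]].

Definition enabled (C : config) (n : Node) : Prop :=
  forall p, p \in dom Ng n -> n \in C p.

Definition step (C : config) (n : Node) (a : Res) (C' : config) : Prop :=
  [/\ enabled C n, a \in out Ng n &
      C' = [ffun p => if p \in dom Ng n then delta Ng n a p else C p]].

Fixpoint leads (C : config) (s : seq (Node * Res)) (C' : config) : Prop :=
  match s with
  | [::] => C = C'
  | (n, a) :: s' => exists C1, step C n a C1 /\ leads C1 s' C'
  end.

Definition reachable (C : config) : Prop := exists s, leads C_init s C.

Definition sound : Prop :=
  forall s C, leads C_init s C -> exists s', leads C s' C_fin.

Definition edge : rel Node :=
  fun n n' => [exists p, exists a, n' \in delta Ng n a p].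

Definition acyclic : Prop := forall n n', edge n n' -> ~~ connect edge n' n.

Definition local_path (m n : Node) : bool := connect edge m n.

Definition parallel (m n : Node) : Prop :=
  dom Ng m :&: dom Ng n = set0 /\
  exists C, [/\ reachable C, enabled C m & enabled C n].

End Neg.

(* In a deterministic negotiation every reachable configuration gives each
   process a single node, and soundness lets every node of a reachable
   configuration eventually become enabled.  Hence if m and n are enabled
   together and there were a local path m ->* w -> n, through a process p of n,
   one could run from m until w is enabled; tracing the node w of p back to the
   configuration enabling n yields a local path n ->* w, closing a cycle.
   Conversely, cut a run containing m and n at the first of them, say m.  The
   later steps none of whose processes carry a node downstream of m can be
   replayed before m fires; n is among them, as there is no local path from m
   to n, so m and n become enabled together. *)
From mathcomp Require Import all_boot.
Set Implicit Arguments. Unset Strict Implicit. Unset Printing Implicit Defensive.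

Lemma connect_last_edge (T : finType) (e : rel T) x y :
  connect e x y -> x != y -> exists2 z, connect e x z & e z y.
Proof.
case/connectP=> q; case/lastP: q => [_ ->|q z]; first by rewrite eqxx.
rewrite rcons_path last_rcons => /andP [xq ez] -> _.
by exists (last x q) => //; apply/connectP; exists q.
Qed.

Section Negotiation.
Variables (Proc Node Res : finType) (Ng : negotiation Proc Node Res).

Definition fire (C : config Proc Node) (x : Node) (a : Res) : config Proc Node :=
  [ffun p => if p \in dom Ng x then delta Ng x a p else C p].

Definition single_valued (C : config Proc Node) : Prop :=
  forall p x y, x \in C p -> y \in C p -> x = y.

Definition coenabled (m n : Node) : Prop :=
  exists C, [/\ reachable Ng C, enabled Ng C m & enabled Ng C n].

Definition eventually_enabled (C : config Proc Node) (n : Node) : Prop :=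
  exists s C', leads Ng C s C' /\ enabled Ng C' n.

Lemma fireE C x a p :
  fire C x a p = if p \in dom Ng x then delta Ng x a p else C p.
Proof. exact: ffunE. Qed.

Lemma fire_step C x a :
  enabled Ng C x -> a \in out Ng x -> step Ng C x a (fire C x a).
Proof. by []. Qed.

Lemma step_fire C x a C' : step Ng C x a C' -> C' = fire C x a.
Proof. by case. Qed.

Lemma leads_cat C s1 C1 s2 C2 :
  leads Ng C s1 C1 -> leads Ng C1 s2 C2 -> leads Ng C (s1 ++ s2) C2.
Proof.
elim: s1 C => [|[x a] s1 IH] C /=; first by move->.
by case=> C' [st l] l2; exists C'; split; last exact: IH l l2.
Qed.

Lemma reachable_init : reachable Ng (C_init Ng).
Proof. by exists [::]. Qed.

Lemma reachable_leads C s C' :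
  reachable Ng C -> leads Ng C s C' -> reachable Ng C'.
Proof. by case=> s0 l0 l; exists (s0 ++ s); apply: leads_cat l0 l. Qed.

Lemma reachable_step C x a C' :
  reachable Ng C -> step Ng C x a C' -> reachable Ng C'.
Proof. by move=> rC st; apply: (@reachable_leads _ [:: (x, a)]) rC _; exists C'. Qed.

Lemma leads_eventually_enabled C s C' z :
  leads Ng C s C' -> eventually_enabled C' z -> eventually_enabled C z.
Proof.
by move=> l [s' [C'' [l' ez]]]; exists (s ++ s'), C''; split; first exact: leads_cat l l'.
Qed.

Lemma coenabled_sym m n : coenabled m n -> coenabled n m.
Proof. by case=> C [rC em en]; exists C. Qed.

Lemma edgeP x y : reflect (exists p a, y \in delta Ng x a p) (edge Ng x y).
Proof.
apply: (iffP existsP) => [[p /existsP [a yd]]|[p [a yd]]]; first by exists p, a.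
by exists p; apply/existsP; exists a.
Qed.

Lemma edge_delta x a p y : y \in delta Ng x a p -> edge Ng x y.
Proof. by move=> yd; apply/edgeP; exists p, a. Qed.

Lemma leads_connect C s C' p y : leads Ng C s C' -> y \in C' p ->
  exists2 x, x \in C p & connect (edge Ng) x y.
Proof.
elim: s C => [|[x a] s IH] C /=; first by move-> => yC; exists y.
case=> C1 [st l] /(IH _ l) [z]; rewrite (step_fire st) fireE.
case: ifP => [pd zd|_ zC] cz; last by exists z.
case: st => ex _ _; exists x; first exact: ex.
by apply: connect_trans cz; exact: connect1 (edge_delta zd).
Qed.

(* [D] follows the original run after [m] has fired; [C] replays, without
   firing [m], the steps that avoid the processes [T] downstream of [m]. *)
Definition tracks (m : Node) (T : {set Proc}) (C D : config Proc Node) : Prop :=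
  [/\ reachable Ng C, enabled Ng C m, dom Ng m \subset T,
      forall p, p \notin T -> C p = D p
    & forall p y, p \in T -> y \in D p -> connect (edge Ng) m y].

Lemma step_tracks C m a C1 :
  reachable Ng C -> step Ng C m a C1 -> tracks m (dom Ng m) C C1.
Proof.
move=> rC st; case: (st) => em _ _; split => // [p pm|p y pm].
  by rewrite (step_fire st) fireE (negbTE pm).
by rewrite (step_fire st) fireE pm => yd; exact: connect1 (edge_delta yd).
Qed.

Lemma tracks_step m T C D x a D1 : tracks m T C D -> step Ng D x a D1 ->
  exists T' C', tracks m T' C' D1.
Proof.
case=> rC em mT agr down st; case: (st) => ex ax _; rewrite (step_fire st).
have [dis|] := boolP [disjoint dom Ng x & T]; last first.
  rewrite -setI_eq0 => /set0Pn [p0 /setIP [p0x p0T]].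
  have mx := down _ _ p0T (ex _ p0x).
  exists (T :|: dom Ng x), C; split=> //; first exact: subset_trans mT (subsetUl _ _).
    by move=> p; rewrite inE negb_or fireE => /andP [pT /negbTE ->]; apply: agr.
  move=> p y; rewrite inE fireE; case: ifP => [_ _ yd|_]; last by rewrite orbF; apply: down.
  by apply: connect_trans mx _; exact: connect1 (edge_delta yd).
have stC : step Ng C x a (fire C x a).
  by apply: fire_step ax => p px; rewrite agr ?(disjointFr dis px) ?ex.
exists T, (fire C x a); split=> //; first exact: reachable_step rC stC.
- by move=> p pm; rewrite fireE (disjointFl dis (subsetP mT _ pm)); apply: em.
- by move=> p pT; rewrite !fireE; case: ifP => // _; apply: agr.
by move=> p y pT; rewrite fireE (disjointFl dis pT); apply: down.
Qed.

Lemma tracks_enabled m T C D n : tracks m T C D ->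
  enabled Ng D n -> ~~ connect (edge Ng) m n -> enabled Ng C n.
Proof.
case=> _ _ _ agr down en /negP mn p pn.
have [pT|pT] := boolP (p \in T); first by case: mn; apply: down pT (en _ pn).
by rewrite agr // en.
Qed.

Lemma tracks_leads m T C D s D' n : tracks m T C D -> leads Ng D s D' ->
  n \in map fst s -> ~~ connect (edge Ng) m n -> coenabled m n.
Proof.
elim: s T C D => //= [[x a] s IH] T C D tr [D1 [st l]].
rewrite inE => /orP [/eqP -> | ns] mn.
  case: st tr => ex _ _ tr; case: (tr) => rC em _ _ _.
  by exists C; split; last exact: tracks_enabled tr ex mn.
by have [T' [C' tr']] := tracks_step tr st; apply: IH tr' l ns mn.
Qed.

Lemma leads_coenabled m n C s C' : m != n ->
  ~~ connect (edge Ng) m n -> ~~ connect (edge Ng) n m ->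
  reachable Ng C -> leads Ng C s C' -> m \in map fst s -> n \in map fst s ->
  coenabled m n.
Proof.
move=> mn nmn nnm; elim: s C => //= [[x a] s IH] C rC [C1 [st l]]; rewrite !inE /=.
have [xm|xm] := eqVneq x m.
  subst x; move=> _ /orP [/eqP nm|ns]; first by rewrite nm eqxx in mn.
  exact: tracks_leads (step_tracks rC st) l ns nmn.
have [xn|xn] := eqVneq x n.
  by subst x => /= ms _; apply/coenabled_sym/(tracks_leads (step_tracks rC st) l ms nnm).
exact: IH (reachable_step rC st) l.
Qed.

Hypothesis wf : wf_negotiation Ng.

Lemma delta_out_dom x a p y :
  y \in delta Ng x a p -> a \in out Ng x /\ p \in dom Ng x.
Proof.
case: wf => _ _ _ def _ yd; apply/andP; rewrite -def.
by apply/set0Pn; exists y.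
Qed.

Lemma delta_dom x a p y : y \in delta Ng x a p -> p \in dom Ng y.
Proof. by case: wf => _ _ _ _; apply. Qed.

Lemma disjoint_dom_neq m n : dom Ng m :&: dom Ng n = set0 -> m != n.
Proof.
case: wf => dom0 _ _ _ _ dis; apply: contraNneq (dom0 m) => mn.
by rewrite -[dom Ng m]setIid {2}mn dis.
Qed.

Lemma disjoint_dom_neq_fin m n : dom Ng m :&: dom Ng n = set0 -> m != n_fin Ng.
Proof.
case: wf => dom0 [_ dom_fin] _ _ _ dis; apply: contraNneq (dom0 n) => mfin.
by rewrite -dis mfin dom_fin setTI.
Qed.

Lemma enabled_fire C x a n : dom Ng x :&: dom Ng n = set0 ->
  enabled Ng C n -> enabled Ng (fire C x a) n.
Proof.
move=> dis en p pn; rewrite fireE; case: ifP => [px|_]; last exact: en.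
have : p \in dom Ng x :&: dom Ng n by rewrite inE px pn.
by rewrite dis inE.
Qed.

Lemma coenabled_run m n : dom Ng m :&: dom Ng n = set0 -> coenabled m n ->
  exists s C, leads Ng (C_init Ng) s C /\ m \in map fst s /\ n \in map fst s.
Proof.
move=> dis [C [[s0 l0] em en]]; case: (wf) => _ _ out0 _ _.
have /set0Pn [a am] := out0 _ (disjoint_dom_neq_fin dis).
have /set0Pn [b bn] := out0 _ (disjoint_dom_neq_fin (etrans (setIC _ _) dis)).
have en1 := enabled_fire a dis en.
exists (s0 ++ [:: (m, a); (n, b)]), (fire (fire C m a) n b); split.
  apply: leads_cat l0 _; exists (fire C m a); split; first exact: fire_step.
  by exists (fire (fire C m a) n b); split; first exact: fire_step.
by rewrite map_cat !mem_cat /= !inE !eqxx !orbT.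
Qed.

Hypothesis det : deterministic Ng.

Lemma leads_single_valued C s C' :
  single_valued C -> leads Ng C s C' -> single_valued C'.
Proof.
elim: s C => [|[x a] s IH] C sv /=; first by move<-.
case=> C1 [st]; apply: IH => p y z; rewrite (step_fire st) !fireE.
case: ifP => [px|_]; last exact: sv.
case: st => _ ax _; have /eqP/cards1P [w ->] := det ax px.
by rewrite !inE => /eqP -> /eqP ->.
Qed.

Lemma reachable_single_valued C : reachable Ng C -> single_valued C.
Proof.
case=> s; apply: leads_single_valued => p y z.
by rewrite !ffunE !inE => /eqP -> /eqP ->.
Qed.

Hypothesis snd : sound Ng.

(* Along a run to [C_fin], the node of [p] stays put until it fires, which
   happens at the latest in [C_fin]. *)
Lemma reachable_eventually_enabled C p y :
  reachable Ng C -> y \in C p -> eventually_enabled C y.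
Proof.
move=> rC; have [s0 /snd [s]] := rC.
elim: s C rC {s0} => [|[x a] s IH] C rC /=.
  move=> -> /[!ffunE] /[!inE] /eqP ->.
  by exists [::], (C_fin Ng); split => // q _; rewrite ffunE inE.
case=> C1 [st l] yC; case: (st) => ex _ _.
have [<-|xy] := eqVneq x y; first by exists [::], C.
apply: (@leads_eventually_enabled _ [:: (x, a)] C1); first by exists C1.
apply: IH (reachable_step rC st) l _.
rewrite (step_fire st) fireE; case: ifP => // px.
by rewrite (reachable_single_valued rC (ex _ px) yC) eqxx in xy.
Qed.

Lemma edge_eventually_enabled C x y :
  reachable Ng C -> enabled Ng C x -> edge Ng x y -> eventually_enabled C y.
Proof.
move=> rC ex /edgeP [p [a yd]]; have [ax px] := delta_out_dom yd.
have st := fire_step ex ax.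
apply: (@leads_eventually_enabled _ [:: (x, a)] (fire C x a)); first by exists (fire C x a).
by apply: (reachable_eventually_enabled (p := p) (reachable_step rC st)); rewrite fireE px.
Qed.

Lemma connect_eventually_enabled C x z :
  reachable Ng C -> enabled Ng C x -> connect (edge Ng) x z -> eventually_enabled C z.
Proof.
move=> rC ex /connectP [q]; elim: q x C rC ex => [|y q IH] x C rC ex /=.
  by move=> _ ->; exists [::], C.
case/andP=> xy yq zq; have [s [C1 [l ey]]] := edge_eventually_enabled rC ex xy.
exact: leads_eventually_enabled l (IH _ _ (reachable_leads rC l) ey yq zq).
Qed.

Hypothesis ac : acyclic Ng.

Lemma coenabled_not_connect m n : m != n -> coenabled m n -> ~~ connect (edge Ng) m n.
Proof.
move=> mn [C [rC em en]]; apply/negP => /connect_last_edge /(_ mn) [w mw wn].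
have /edgeP [p [a nd]] := wn; have [_ pw] := delta_out_dom nd.
have [s [C' [l ew]]] := connect_eventually_enabled rC em mw.
have [y yC yw] := leads_connect l (ew _ pw).
move: yw; rewrite (reachable_single_valued rC yC (en _ (delta_dom nd))).
by apply/negP/ac.
Qed.

End Negotiation.

Theorem proposition6p3 (Proc Node Res : finType) (Ng : negotiation Proc Node Res) :
  wf_negotiation Ng -> acyclic Ng -> deterministic Ng -> sound Ng ->
  forall m n : Node, dom Ng m :&: dom Ng n = set0 ->
  (parallel Ng m n <->
   ((exists (s : seq (Node * Res)) (C : config Proc Node),
        leads Ng (C_init Ng) s C /\ m \in map fst s /\ n \in map fst s) /\
    ~ local_path Ng m n /\ ~ local_path Ng n m)).
Proof.
move=> wf ac det snd m n dis; have mn := disjoint_dom_neq wf dis.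
split.
  case=> _ mn_co; split; first exact: coenabled_run.
  split; apply/negP; first exact: coenabled_not_connect.
  by apply: coenabled_not_connect (coenabled_sym mn_co) => //; rewrite eq_sym.
case=> [[s [C [l [ms ns]]]] [/negP nmn /negP nnm]]; split => //.
exact: leads_coenabled mn nmn nnm (reachable_init Ng) l ms ns.
Qed.
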